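(* Let $\Lambda$ be a Gaussian lattice of hyperbolic signature $(1,n)$, $n\ge 2$, with $h$ taking values in $(1+i)\mathcal G$, let $\chi$ be an antiunitary involution, and let $r$ be a root with $\mathbb B^\chi\cap H_r\neq\emptyset$. Then there is a sublattice $N\subset\Lambda^\chi$ isomorphic to one of $A_1$, $A_1(2)$, $A_1\oplus A_1(2)$, $A_1(2)^2$ such that $\mathbb B^\chi\cap H_r=\{[x]\in\mathbb B^\chi: h(x,y)=0\text{ for all }y\in N\}$.
   Context: Let $\mathcal G=\mathbb Z[i]$. A Gaussian lattice is a free $\mathcal G$-module $\Lambda$ of finite rank with a nondegenerate Hermitian form $h$ (antilinear in first, linear in second argument). A root is $r\in\Lambda$ with $h(r,r)=-2$; $\mathbb B=\mathbb P\{z\in\Lambda\otimes_{\mathcal G}\mathbb C:h(z,z)>0\}$, $H_r=\{z\in\mathbb B:h(r,z)=0\}$. An antiunitary involution is an additive bijection $\chi$ with $\chi^2=1$, $\chi(\lambda x)=\bar\lambda\chi(x)$, $h(\chi x,\chi y)=\overline{h(x,y)}$; $\Lambda^\chi=\{x:\chi x=x\}$ with the real form $h$, and $\mathbb B^\chi=\mathbb P\{x\in\Lambda^\chi\otimes\mathbb R:h(x,x)>0\}$. $\mathbb Z$-lattices: $A_1=(-2)$ (rank one, form $-2xy$), $L(n)$ is $L$ with form scaled by $n$, $\oplus$ orthogonal sum. *)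

From HB Require Import structures.
From mathcomp Require Import all_boot all_order all_algebra.
Set Implicit Arguments. Unset Strict Implicit. Unset Printing Implicit Defensive.
Import Order.TTheory GRing.Theory Num.Theory.
Local Open Scope ring_scope.

Section GaussDefs.
Variable C : numClosedFieldType.
Variable m : nat.
Implicit Types (H : 'M[C]_m) (x y z : 'cV[C]_m).

Definition gaussian (a : C) : Prop := exists p q : int, a = p%:~R + q%:~R * 'i.

(* Lambda = Z[i]^m, as column vectors with Gaussian-integer entries *)
Definition in_lattice x : Prop := forall i, gaussian (x i 0).

Definition hform H x y : C := \sum_(i < m) \sum_(j < m) (x i 0)^* * H i j * y j 0.

Definition hermitian_mx H : Prop := forall i j, H j i = (H i j)^*.

(* hyperbolic signature (1, m-1): Sylvester normal form diag(1,-1,...,-1) *)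
Definition sig_diag : 'M[C]_m :=
  \matrix_(i < m, j < m) (if i == j then (if val i == 0%N then 1 else -1) else 0).
Definition hyperbolic_signature H : Prop :=
  exists P : 'M[C]_m, P \in unitmx /\ (map_mx Num.conj P)^T *m H *m P = sig_diag.

Definition values_in_1pi H : Prop :=
  forall x y, in_lattice x -> in_lattice y ->
    exists g, gaussian g /\ hform H x y = (1 + 'i) * g.

Definition antiunitary_involution H (chi : 'cV[C]_m -> 'cV[C]_m) : Prop :=
  [/\ (forall x, in_lattice x -> in_lattice (chi x)),
      (forall x y, in_lattice x -> in_lattice y -> chi (x + y) = chi x + chi y),
      (forall (l : C) x, gaussian l -> in_lattice x -> chi (l *: x) = l^* *: chi x),
      (forall x, in_lattice x -> chi (chi x) = x) &
      (forall x y, in_lattice x -> in_lattice y ->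
         hform H (chi x) (chi y) = (hform H x y)^*)].

Definition is_root H r : Prop := in_lattice r /\ hform H r r = -2.

Definition fixed_lattice (chi : 'cV[C]_m -> 'cV[C]_m) x : Prop :=
  in_lattice x /\ chi x = x.

(* Lambda^chi (x) R, realized as the real span of Lambda^chi inside C^m *)
Definition in_real_span (chi : 'cV[C]_m -> 'cV[C]_m) x : Prop :=
  exists (vs : seq 'cV[C]_m) (cs : seq C),
    [/\ size cs = size vs, all (fun c => c \is Num.real) cs,
        (forall v, v \in vs -> fixed_lattice chi v) &
        x = \sum_(k < size vs) cs`_k *: vs`_k].

(* z represents a point [z] of B^chi = P{x in Lambda^chi (x) R : h(x,x) > 0} *)
Definition in_Bchi H chi z : Prop :=
  exists (c : C) x, [/\ c != 0, in_real_span chi x, 0 < hform H x x & z = c *: x].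

Definition on_mirror H r z : Prop := hform H r z = 0.

Definition in_Zspan (vs : seq 'cV[C]_m) y : Prop :=
  exists cs : seq int, size cs = size vs /\ y = \sum_(k < size vs) vs`_k *~ cs`_k.

Definition gram H (vs : seq 'cV[C]_m) : seq (seq C) :=
  [seq [seq hform H u v | v <- vs] | u <- vs].

(* the Z-span of vs is isometric to the Z-lattice with Gram matrix G via the
   basis vs (G nondegenerate forces vs to be Z-independent, hence a basis) *)
Definition gram_is H (vs : seq 'cV[C]_m) (G : seq (seq int)) : Prop :=
  gram H vs = [seq [seq (a%:~R : C) | a <- row] | row <- G].

End GaussDefs.

Definition gram_A1 : seq (seq int) := [:: [:: (-2)%R]].
Definition gram_A1_2 : seq (seq int) := [:: [:: (-4)%R]].
Definition gram_A1_A1_2 : seq (seq int) := [:: [:: (-2)%R; 0%R]; [:: 0%R; (-4)%R]].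
Definition gram_A1_2_sq : seq (seq int) := [:: [:: (-4)%R; 0%R]; [:: 0%R; (-4)%R]].

From HB Require Import structures.
From mathcomp Require Import all_boot all_order all_algebra.
From mathcomp Require Import ring zify.
Set Implicit Arguments.
Unset Strict Implicit.
Unset Printing Implicit Defensive.
Import Order.TTheory GRing.Theory Num.Theory.
Local Open Scope ring_scope.

(* Let s = chi r and a = h(r, s) = A + B i, where A + B is even because h takes
   values in (1+i)G.  Since chi is antiunitary and fixes every x of
   Lambda^chi (x) R, we get h(x, s) = conj h(x, r) there, so on B^chi the
   condition h(x, r) = 0 is equivalent to h(x, mu r + conj(mu) s) = 0 =
   h(x, nu r + conj(nu) s) for any Gaussian integers mu, nu with
   Im(conj(mu) nu) <> 0, and these two vectors are chi-fixed.  If |a|^2 < 4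
   there are five possible values of a, and in each case a suitable pair spans
   A_1 + A_1(2) or A_1(2)^2.  If |a|^2 >= 4, the vector a r + 2 s is orthogonal
   to a positive vector of B^chi and has h >= 0, so it vanishes by
   hyperbolicity: s is a unimodular multiple of r, a is one of +-2, +-2i, and a
   single chi-fixed multiple of r spans A_1 or A_1(2). *)

Definition gint {C : numClosedFieldType} (p q : int) : C := p%:~R + q%:~R * 'i.

Section GaussianIntegers.
Variable C : numClosedFieldType.
Implicit Types (p q k : int).

Lemma gaussian_gint p q : gaussian (gint p q : C).
Proof. by exists p, q. Qed.

Lemma gint_int k : gint k 0 = k%:~R :> C.
Proof. by rewrite /gint mul0r addr0. Qed.

Lemma gintD p q p' q' :
  gint p q + gint p' q' = gint (p + p') (q + q') :> C.
Proof. by rewrite /gint; ring. Qed.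

Lemma gintM p q p' q' :
  gint p q * gint p' q' = gint (p * p' - q * q') (p * q' + q * p') :> C.
Proof.
have ii : 'i * 'i = -1 :> C by rewrite -expr2 sqrCi.
rewrite /gint.
have -> : (p%:~R + q%:~R * 'i) * (p'%:~R + q'%:~R * 'i) =
  p%:~R * p'%:~R + q%:~R * q'%:~R * ('i * 'i) + (p%:~R * q'%:~R + q%:~R * p'%:~R) * 'i :> C
  by ring.
by rewrite ii; ring.
Qed.

Lemma gintMz k p q : k%:~R * gint p q = gint (k * p) (k * q) :> C.
Proof. by rewrite -gint_int gintM; congr gint; ring. Qed.

Lemma gintC p q : (gint p q)^* = gint p (- q) :> C.
Proof.
by rewrite /gint rmorphD rmorphM /= conjCi !conj_Creal ?realz // intrN; ring.
Qed.

Lemma gint_norm p q : (gint p q)^* * gint p q = (p * p + q * q)%:~R :> C.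
Proof. by rewrite gintC gintM -gint_int; congr gint; ring. Qed.

Lemma gint_eq0 p q : (gint p q == 0 :> C) = (p * p + q * q == 0).
Proof. by rewrite -mul_conjC_eq0 mulrC gint_norm intr_eq0. Qed.

Lemma gaussian_conj (c : C) : gaussian c -> gaussian c^*.
Proof. by case=> p [q ->]; rewrite -/(gint p q) gintC; apply: gaussian_gint. Qed.

Lemma in_latticeD m (x y : 'cV[C]_m) :
  in_lattice x -> in_lattice y -> in_lattice (x + y).
Proof.
move=> xL yL i; rewrite mxE.
have [p [q ->]] := xL i; have [p' [q' ->]] := yL i.
by rewrite -!/(gint _ _) gintD; apply: gaussian_gint.
Qed.

Lemma in_latticeZ m (c : C) (x : 'cV[C]_m) :
  gaussian c -> in_lattice x -> in_lattice (c *: x).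
Proof.
move=> [p [q ->]] xL i; rewrite mxE.
have [p' [q' ->]] := xL i.
by rewrite -!/(gint _ _) gintM; apply: gaussian_gint.
Qed.

End GaussianIntegers.

Section HermitianForm.
Variables (C : numClosedFieldType) (m : nat) (H : 'M[C]_m).
Implicit Types (x y z : 'cV[C]_m).

Lemma hformDl x y z : hform H (y + z) x = hform H y x + hform H z x.
Proof.
rewrite /hform -big_split; apply: eq_bigr => i _; rewrite -big_split.
by apply: eq_bigr => j _; rewrite mxE rmorphD /= !mulrDl.
Qed.

Lemma hformDr x y z : hform H x (y + z) = hform H x y + hform H x z.
Proof.
rewrite /hform -big_split; apply: eq_bigr => i _; rewrite -big_split.
by apply: eq_bigr => j _; rewrite mxE mulrDr.
Qed.

Lemma hformZl x c y : hform H (c *: y) x = c^* * hform H y x.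
Proof.
rewrite /hform mulr_sumr; apply: eq_bigr => i _; rewrite mulr_sumr.
by apply: eq_bigr => j _; rewrite mxE rmorphM /=; ring.
Qed.

Lemma hformZr x c y : hform H x (c *: y) = c * hform H x y.
Proof.
rewrite /hform mulr_sumr; apply: eq_bigr => i _; rewrite mulr_sumr.
by apply: eq_bigr => j _; rewrite mxE; ring.
Qed.

Lemma hform_suml x N (F : 'I_N -> 'cV[C]_m) :
  hform H (\sum_(k < N) F k) x = \sum_(k < N) hform H (F k) x.
Proof.
elim/big_rec2: _ => [|k y1 y2 _ IH]; last by rewrite hformDl IH.
by rewrite -(scale0r 0) hformZl rmorph0 mul0r.
Qed.

Lemma hform_sumr x N (F : 'I_N -> 'cV[C]_m) :
  hform H x (\sum_(k < N) F k) = \sum_(k < N) hform H x (F k).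
Proof.
elim/big_rec2: _ => [|k y1 y2 _ IH]; last by rewrite hformDr IH.
by rewrite -(scale0r 0) hformZr mul0r.
Qed.

Lemma hformC : hermitian_mx H -> forall x y, hform H x y = (hform H y x)^*.
Proof.
move=> herH x y; rewrite /hform exchange_big rmorph_sum /=.
apply: eq_bigr => i _; rewrite rmorph_sum /=; apply: eq_bigr => j _.
by rewrite !rmorphM /= conjCK -herH; ring.
Qed.

Lemma in_Zspan_mem (vs : seq 'cV[C]_m) v : v \in vs -> in_Zspan vs v.
Proof.
move=> vin; have jlt : (index v vs < size vs)%N by rewrite index_mem.
exists (mkseq (fun i => (i == index v vs)%:Z) (size vs)); rewrite size_mkseq.
split=> //; rewrite (bigD1 (Ordinal jlt)) //= nth_mkseq // eqxx mulr1z.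
rewrite nth_index // big1 ?addr0 // => k kj; rewrite nth_mkseq //.
suff -> : (k == index v vs :> nat) = false by rewrite mulr0z.
by apply: contraNF kj => /eqP kj; apply/eqP/val_inj.
Qed.

Lemma hform_Zspan_eq0 (vs : seq 'cV[C]_m) z y :
  (forall v, v \in vs -> hform H z v = 0) -> in_Zspan vs y -> hform H z y = 0.
Proof.
move=> zvs [cs [_ ->]]; rewrite hform_sumr big1 // => k _.
by rewrite -scaler_int hformZr zvs ?mulr0 // mem_nth.
Qed.

(* chi is only semilinear, but the real coefficients of x are fixed by conj. *)
Lemma hform_real_span_chi chi x w :
  antiunitary_involution H chi -> in_real_span chi x -> in_lattice w ->
  hform H x (chi w) = (hform H x w)^*.
Proof.
case=> _ _ _ _ chiH [vs [cs [sz csR vsF ->]]] wL.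
rewrite !hform_suml rmorph_sum /=; apply: eq_bigr => k _.
have [vL vF] := vsF _ (mem_nth 0 (ltn_ord k)).
have ckR : cs`_k \is Num.real by apply: (all_nthP 0 csR); rewrite sz.
by rewrite !hformZl rmorphM /= conjCK (conj_Creal ckR) -{1}vF chiH.
Qed.

End HermitianForm.

Lemma hform_mxE (C : numClosedFieldType) m (H : 'M[C]_m) (x y : 'cV[C]_m) : hform H x y = ((map_mx Num.conj x)^T *m H *m y) 0 0.
Proof.
rewrite /hform mxE exchange_big /=; apply: eq_bigr => j _.
by rewrite mxE mulr_suml; apply: eq_bigr => i _; rewrite !mxE.
Qed.

Lemma hform_basis_change (C : numClosedFieldType) m (H P D : 'M[C]_m) (y z : 'cV[C]_m) :
  P \in unitmx -> (map_mx Num.conj P)^T *m H *m P = D ->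
  hform H y z = hform D (invmx P *m y) (invmx P *m z).
Proof.
move=> Pu <-.
rewrite -{1}(mulKVmx Pu y) -{1}(mulKVmx Pu z) !hform_mxE map_mxM trmx_mul.
by rewrite !mulmxA.
Qed.

Section HyperbolicSignature.
Variables (C : numClosedFieldType) (n : nat).
Implicit Types (y : 'cV[C]_n.+1).

Lemma hform_sig_diag y :
  hform (sig_diag C n.+1) y y =
  (y ord0 0)^* * y ord0 0 - \sum_(i < n) (y (lift ord0 i) 0)^* * y (lift ord0 i) 0.
Proof.
have -> : hform (sig_diag C n.+1) y y =
    \sum_(i < n.+1) (y i 0)^* * (if val i == 0%N then 1 else -1) * y i 0.
  rewrite /hform; apply: eq_bigr => i _.
  rewrite (bigD1 i) //= big1 ?addr0 => [|j ji]; first by rewrite mxE eqxx.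
  by rewrite mxE eq_sym (negPf ji) mulr0 mul0r.
rewrite big_ord_recl /= mulr1 -sumrN; congr (_ + _).
by apply: eq_bigr => i _; rewrite mulrN1 mulNr.
Qed.

Lemma sig_diag_neg_def y : y ord0 0 = 0 ->
  hform (sig_diag C n.+1) y y <= 0 /\ (hform (sig_diag C n.+1) y y = 0 -> y = 0).
Proof.
move=> y0; rewrite hform_sig_diag y0 rmorph0 mul0r sub0r oppr_le0.
have sq_ge0 (i : 'I_n) : true -> 0 <= (y (lift ord0 i) 0)^* * y (lift ord0 i) 0.
  by rewrite mulrC mul_conjC_ge0.
split=> [|/eqP]; first exact: sumr_ge0.
rewrite oppr_eq0 => /eqP/(psumr_eq0P sq_ge0) sq0.
apply/matrixP => i j; rewrite (ord1 j) mxE.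
case: (unliftP ord0 i) => [i' ->|->] //.
by apply/eqP; rewrite -mul_conjC_eq0 mulrC sq0.
Qed.

Lemma hyperbolic_orth_pos_eq0 (H : 'M[C]_n.+1) x v :
  hermitian_mx H -> hyperbolic_signature H ->
  0 < hform H x x -> hform H x v = 0 -> 0 <= hform H v v -> v = 0.
Proof.
move=> herH [P [Pu HP]] xpos xv vnneg.
have toD y z := @hform_basis_change _ _ H P _ y z Pu HP.
set x' := invmx P *m x; set v' := invmx P *m v.
have x'0 : x' ord0 0 != 0.
  apply/eqP => /sig_diag_neg_def[le0 _].
  by move: xpos; rewrite toD -/x' => /lt_le_trans/(_ le0); rewrite ltxx.
(* k is chosen so that w has vanishing first coordinate in a Sylvester basis. *)
set k := v' ord0 0 / x' ord0 0; set w := v - k *: x.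
have ww : hform H w w = hform H v v + k^* * k * hform H x x.
  rewrite /w -scaleNr !hformDl !hformDr !hformZl !hformZr (hformC herH v x) xv.
  by rewrite rmorphN /= rmorph0; ring.
have w'0 : (invmx P *m w) ord0 0 = 0.
  rewrite /w mulmxBr -scalemxAr mxE [X in _ + X]mxE [X in _ - X]mxE -/x' -/v' /k.
  by rewrite divfK // subrr.
have [wle0 w0] := sig_diag_neg_def w'0.
have kk : 0 <= k^* * k by rewrite mulrC mul_conjC_ge0.
have hxx0 : 0 <= k^* * k * hform H x x by rewrite mulr_ge0 // ltW.
have ww0 : hform H w w = 0.
  by apply/eqP; rewrite eq_le {1}toD wle0 ww addr_ge0.
have /eqP : hform H v v + k^* * k * hform H x x = 0 by rewrite -ww.
rewrite paddr_eq0 // => /andP[_]; rewrite mulf_eq0 (gt_eqF xpos) orbF.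
rewrite mulrC mul_conjC_eq0 => /eqP k0.
have : w = 0 by rewrite -(mulKVmx Pu w) w0 -?toD // mulmx0.
by rewrite /w k0 scale0r subr0.
Qed.

End HyperbolicSignature.

Definition mirror_shapes : seq (seq (seq int)) :=
  [:: gram_A1; gram_A1_2; gram_A1_A1_2; gram_A1_2_sq].

Section MirrorSublattice.
Variables (C : numClosedFieldType) (n : nat) (H : 'M[C]_n.+1).
Variables (chi : 'cV[C]_n.+1 -> 'cV[C]_n.+1) (r : 'cV[C]_n.+1).
Hypotheses (herH : hermitian_mx H) (chiH : antiunitary_involution H chi).
Hypotheses (rL : in_lattice r) (rr : hform H r r = -2).

Local Notation s := (chi r).
Local Notation a := (hform H r (chi r)).
Local Notation sym mu := (mu *: r + mu^* *: chi r).

Definition mirror_cut (vs : seq 'cV[C]_n.+1) :=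
  forall x, in_real_span chi x ->
    hform H x r = 0 <-> forall v, v \in vs -> hform H x v = 0.

Definition mirror_family vs (G : seq (seq int)) :=
  [/\ forall v, v \in vs -> fixed_lattice chi v, gram_is H vs G & mirror_cut vs].

Lemma mirror_cutP vs : mirror_cut vs -> forall z,
  (in_Bchi H chi z /\ on_mirror H r z) <->
  (in_Bchi H chi z /\ forall y, in_Zspan vs y -> hform H z y = 0).
Proof.
move=> cut z; split=> -[zB zorth]; split=> //.
all: case: zB => c [x [c0 xR _ ez]]; subst z.
- have /(cut x xR) xvs : hform H x r = 0.
    move: zorth; rewrite /on_mirror hformZr (hformC herH r) => /eqP.
    by rewrite mulf_eq0 (negPf c0) conjC_eq0 => /eqP.
  by move=> y; apply: hform_Zspan_eq0 => v vin; rewrite hformZl xvs ?mulr0.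
- have /(cut x xR) xr : forall v, v \in vs -> hform H x v = 0.
    move=> v /in_Zspan_mem/zorth; rewrite hformZl => /eqP.
    by rewrite mulf_eq0 conjC_eq0 (negPf c0) => /eqP.
  by rewrite /on_mirror hformZr (hformC herH r) xr rmorph0 mulr0.
Qed.

Lemma hform_chi_root : hform H s s = -2.
Proof.
by case: chiH => _ _ _ _ ->; rewrite // rr rmorphN /= rmorph_nat.
Qed.

Lemma hform_real_span_sym x mu : in_real_span chi x ->
  hform H x (sym mu) = mu * hform H x r + mu^* * (hform H x r)^*.
Proof. by move=> xR; rewrite hformDr !hformZr (hform_real_span_chi chiH xR rL). Qed.

Lemma fixed_sym mu : gaussian mu -> fixed_lattice chi (sym mu).
Proof.
case: chiH => chiL chiD chiZ chiK _ muG; have sL := chiL r rL.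
have mu'G := gaussian_conj muG.
split; first by apply: in_latticeD; apply: in_latticeZ.
by rewrite chiD ?chiZ ?chiK ?conjCK 1?addrC //; apply: in_latticeZ.
Qed.

Lemma hform_sym_gint A B p q p' q' : a = gint A B ->
  hform H (sym (gint p q)) (sym (gint p' q')) =
  (2 * (A * (p * p' - q * q') + B * (p * q' + q * p')) - 4 * (p * p' + q * q'))%:~R.
Proof.
move=> ea; have m2 : -2 = gint (-2) 0 :> C by rewrite gint_int.
rewrite !hformDl !hformDr !hformZl !hformZr rr hform_chi_root (hformC herH s r) ea.
by rewrite conjCK m2 -gint_int !gintC !gintM !gintD; congr gint; ring.
Qed.

Lemma mirror_cut_pair p q p' q' : p * q' != q * p' ->
  mirror_cut [:: sym (gint p q); sym (gint p' q')].
Proof.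
move=> det x xR; split=> [xr v|xsym].
  by rewrite !inE => /orP[]/eqP->; rewrite hform_real_span_sym // xr rmorph0 !mulr0 addr0.
have e1 := xsym _ (mem_head _ _); have e2 := xsym _ (mem_last _ [:: sym (gint p' q')]).
rewrite !hform_real_span_sym // in e1 e2.
set t := hform H x r in e1 e2 *; set mu : C := gint p q in e1; set nu : C := gint p' q' in e2.
have : (mu^* * nu - nu^* * mu) * t =
    mu^* * (nu * t + nu^* * t^*) - nu^* * (mu * t + mu^* * t^*) by ring.
rewrite e1 e2 !mulr0 subrr.
have -> : mu^* * nu - nu^* * mu = (2 * (p * q' - q * p'))%:~R * 'i.
  by rewrite /mu /nu !gintC !gintM /gint; ring.
move/eqP; rewrite !mulf_eq0 (negPf (neq0Ci _)) orbF intr_eq0 mulf_eq0 subr_eq0.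
by rewrite (negPf det) orbF => /eqP.
Qed.

Lemma mirror_cut_single mu : mu != 0 -> mirror_cut [:: mu *: r].
Proof.
move=> mu0 x xR; split=> [xr v|]; first by rewrite inE => /eqP->; rewrite hformZr xr mulr0.
move/(_ _ (mem_head _ _)); rewrite hformZr => /eqP.
by rewrite mulf_eq0 (negPf mu0) => /eqP.
Qed.

Lemma root_pairing_gint : values_in_1pi H ->
  exists A B, a = gint A B /\ (2 %| A + B)%Z.
Proof.
case: chiH => chiL _ _ _ _ /(_ r s rL (chiL r rL)) [g [[p [q ->]] ->]].
exists (p - q), (p + q); split; last by apply/dvdzP; exists p; ring.
by rewrite -/(gint p q) (_ : 1 + 'i = gint 1 1) ?gintM; [congr gint; ring | rewrite /gint mul1r].
Qed.

Lemma mirror_family_small A B : a = gint A B -> (2 %| A + B)%Z -> A * A + B * B < 4 ->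
  exists vs G, G \in mirror_shapes /\ mirror_family vs G.
Proof.
move=> ea AB2 small.
have pair p q p' q' G : p * q' != q * p' -> G \in mirror_shapes ->
    gram_is H [:: sym (gint p q); sym (gint p' q')] G ->
    exists vs G, G \in mirror_shapes /\ mirror_family vs G.
  move=> det shapeG gramG; exists [:: sym (gint p q); sym (gint p' q')], G.
  split=> //; split=> //; last exact: mirror_cut_pair.
  by move=> v; rewrite !inE => /orP[]/eqP->; apply/fixed_sym/gaussian_gint.
have [eA|[eA|eA]] : A = -1 \/ A = 0 \/ A = 1 by nia.
all: have [eB|[eB|eB]] : B = -1 \/ B = 0 \/ B = 1 by nia.
all: subst A B; try by exfalso; lia.
all: [> apply: (pair 0 1 1 (-1) gram_A1_A1_2) | apply: (pair 0 1 1 1 gram_A1_A1_2)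
     | apply: (pair 1 0 0 1 gram_A1_2_sq) | apply: (pair 1 0 1 (-1) gram_A1_A1_2)
     | apply: (pair 1 0 1 1 gram_A1_A1_2) ].
all: by rewrite // /gram_is /gram /= !(hform_sym_gint _ _ _ _ ea).
Qed.

Lemma chi_root_collinear x : hyperbolic_signature H ->
  in_real_span chi x -> 0 < hform H x x -> hform H r x = 0 -> 4 <= a^* * a ->
  2 *: s = - (a *: r).
Proof.
move=> sigH xR xpos rx aa; apply/eqP; rewrite -addr_eq0 addrC; apply/eqP.
have xr : hform H x r = 0 by rewrite (hformC herH) rx rmorph0.
apply: (hyperbolic_orth_pos_eq0 herH sigH xpos).
  by rewrite hformDr !hformZr (hform_real_span_chi chiH xR rL) xr rmorph0 !mulr0 addr0.
rewrite !hformDl !hformDr !hformZl !hformZr rr hform_chi_root (hformC herH s r).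
rewrite rmorph_nat (_ : _ + _ = 2 * (a^* * a - 4)); last by ring.
by rewrite mulr_ge0 // subr_ge0.
Qed.

Lemma mirror_family_collinear A B : a = gint A B -> 2 *: s = - (a *: r) ->
  exists vs G, G \in mirror_shapes /\ mirror_family vs G.
Proof.
move=> ea e2.
have AB4 : A * A + B * B = 4.
  apply: (@intr_inj C); rewrite -gint_norm -ea.
  have := congr1 (fun v => hform H v v) e2; rewrite /= -!scaleNr !hformZl !hformZr.
  rewrite hform_chi_root rr rmorph_nat rmorphN /= => e.
  apply: (@mulIf _ (-2)); first by rewrite oppr_eq0 pnatr_eq0.
  have -> : a^* * a * -2 = - a^* * (- a * -2) by ring.
  by rewrite -e; ring.
have single p q G : p * A + q * B = -2 * p -> p * B - q * A = -2 * q ->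
    p * p + q * q != 0 -> G \in mirror_shapes -> gram_is H [:: gint p q *: r] G ->
    exists vs G, G \in mirror_shapes /\ mirror_family vs G.
  move=> e1 e2' pq0 shapeG gramG; exists [:: gint p q *: r], G; split=> //; split=> //.
  - move=> v; rewrite inE => /eqP->; split; first exact/in_latticeZ/rL/gaussian_gint.
    case: chiH => _ _ chiZ _ _; rewrite chiZ //; last exact: gaussian_gint.
    have muA : (gint p q)^* * gint A B = (-2)%:~R * gint p q :> C.
      by rewrite gintC gintM gintMz; congr gint; lia.
    apply: (@scalerI _ _ 2); first by rewrite pnatr_eq0.
    rewrite scalerA mulrC -scalerA e2 scalerN !scalerA ea muA -scaleNr.
    by congr (_ *: _); ring.
  - by apply: mirror_cut_single; rewrite gint_eq0.
have [eA|[eA|[eA|[eA|eA]]]] : A = -2 \/ A = -1 \/ A = 0 \/ A = 1 \/ A = 2 by nia.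
all: have [eB|[eB|[eB|[eB|eB]]]] : B = -2 \/ B = -1 \/ B = 0 \/ B = 1 \/ B = 2 by nia.
all: subst A B; try by exfalso; lia.
all: [> apply: (single 1 0 gram_A1) | apply: (single 1 1 gram_A1_2)
     | apply: (single 1 (-1) gram_A1_2) | apply: (single 0 1 gram_A1) ].
all: try by [lia | rewrite !inE eqxx ?orbT].
all: rewrite /gram_is /gram /= hformZl hformZr rr mulrA gint_norm.
all: by congr [:: [:: _]]; ring.
Qed.

End MirrorSublattice.

Theorem lemma4p11 (C : numClosedFieldType) (n : nat) (H : 'M[C]_n.+1)
    (chi : 'cV[C]_n.+1 -> 'cV[C]_n.+1) (r : 'cV[C]_n.+1) :
  (2 <= n)%N ->
  hermitian_mx H ->
  hyperbolic_signature H ->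
  values_in_1pi H ->
  antiunitary_involution H chi ->
  is_root H r ->
  (exists z, in_Bchi H chi z /\ on_mirror H r z) ->
  exists vs : seq 'cV[C]_n.+1,
    [/\ forall v, v \in vs -> fixed_lattice chi v,
        gram_is H vs gram_A1 \/ gram_is H vs gram_A1_2 \/
        gram_is H vs gram_A1_A1_2 \/ gram_is H vs gram_A1_2_sq &
        forall z, (in_Bchi H chi z /\ on_mirror H r z) <->
                  (in_Bchi H chi z /\ forall y, in_Zspan vs y -> hform H z y = 0)].
Proof.
move=> _ herH sigH h1pi chiH [rL rr] [_ [[c [x [c0 xR xpos ->]]] xmirror]].
have rx : hform H r x = 0.
  by move: xmirror; rewrite /on_mirror hformZr => /eqP; rewrite mulf_eq0 (negPf c0) => /eqP.
suff [vs [G [shapeG [vsF vsG cut]]]] :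
    exists vs G, G \in mirror_shapes /\ mirror_family H chi r vs G.
  exists vs; split=> [//||]; last exact (mirror_cutP herH cut).
  by move: shapeG vsG; rewrite !inE => /or4P[]/eqP->; tauto.
have [A [B [ea AB2]]] := root_pairing_gint chiH rL h1pi.
have [small|large] := ltP (A * A + B * B) 4.
  exact (mirror_family_small herH chiH rL rr ea AB2 small).
apply: (mirror_family_collinear chiH rL rr ea).
apply: (chi_root_collinear herH chiH rL rr sigH xR xpos rx).
by rewrite ea gint_norm -[4 : C]/((4 : int)%:~R : C) ler_int.
Qed.
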